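(* Let $A$ be a finite-dimensional real associative algebra with unit $u$, and let $\{\cdot,\cdot\}$ be a quadratic Poisson bracket on $A$ compatible with its multiplication, with dual map $\delta\colon\mathrm{Symm}(A\otimes A)\to A\wedge A$. Then the group $A^\times$ of invertible elements of $A$ (an open subset of $A$), equipped with the restriction of this bracket, is a Poisson Lie group, and its tangent Lie bialgebra is $A_L$ with cocommutator $\Delta(x)=\delta(x\otimes u+u\otimes x)$.
   Context: $A_L$ is the Lie algebra on $A$ with bracket $[a,b]=ab-ba$ (the Lie algebra of $A^\times$). A quadratic Poisson bracket on $A$ is a Poisson bracket on $C^\infty(A)$ such that the bracket of two linear functions (elements of $A^*$) is a homogeneous quadratic function; it is encoded by $\delta^*(\xi\wedge\eta)=\{\xi,\eta\}\in\mathrm{Sym}^2(A^* )$, and $\delta$ is the dual map, with $\mathrm{Symm}(A\otimes A)$ (symmetric tensors) identified with $(\mathrm{Sym}^2A^* )^*$ and $A\wedge A$ (skew-symmetric tensors) with $(A^*\wedge A^* )^*$. Compatibility with the multiplication means that the multiplication map $A\times A\to A$ is a Poisson map when $A\times A$ carries the product Poisson structure. A Poisson Lie group is a Lie group with a Poisson bracket such that the group multiplication $G\times G\to G$ is a Poisson map; its tangent Lie bialgebra is the Lie algebra with cocommutator given by the linearization of the Poisson tensor at the identity. *)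

From HB Require Import structures.
From mathcomp Require Import all_boot all_order all_algebra.
From mathcomp Require Import all_classical all_reals all_analysis.
Set Implicit Arguments. Unset Strict Implicit. Unset Printing Implicit Defensive.
Import Order.TTheory GRing.Theory Num.Theory.
Import numFieldNormedType.Exports.
Local Open Scope classical_set_scope.
Local Open Scope ring_scope.

(* Coordinates: a finite-dimensional real vector space is 'rV[R]_n.
   Tensors in A (x) A are n x n matrices, x (x) y := x^T *m y.
   A /\ A = is_skew_mx-symmetric matrices, Symm(A (x) A) = symmetric matrices.
   Pairing with the dual: <M, xi (x) eta> = xi *m M *m eta^T. *)

Definition tens {R : realType} {n : nat} (x y : 'rV[R]_n) : 'M[R]_n := x^T *m y.

Definition is_skew_mx {R : realType} {n : nat} (M : 'M[R]_n) : Prop := M^T = - M.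
Definition is_symm_mx {R : realType} {n : nat} (M : 'M[R]_n) : Prop := M^T = M.

Definition ev {R : realType} {n : nat} (i : 'I_n) : 'rV[R]_n := delta_mx 0 i.

Definition pd {R : realType} {n : nat} (f : 'rV[R]_n -> R) (i : 'I_n) (x : 'rV[R]_n) : R :=
  derive f x (ev i).

Definition assoc_unital_algebra {R : realType} {n : nat}
    (mul : 'rV[R]_n -> 'rV[R]_n -> 'rV[R]_n) (u : 'rV[R]_n) : Prop :=
  [/\ (forall (a : R) x y z, mul (a *: x + y) z = a *: mul x z + mul y z),
      (forall (a : R) x y z, mul z (a *: x + y) = a *: mul z x + mul z y),
      (forall x y z, mul x (mul y z) = mul (mul x y) z) &
      (forall x, mul u x = x /\ mul x u = x)].

(* A bivector field P (P x i j = {x_i, x_j}(x)) on an open set U and the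
   Poisson bracket it defines: {f,g}(x) = sum_ij P x i j d_i f(x) d_j g(x). *)
Definition pbracket {R : realType} {n : nat} (P : 'rV[R]_n -> 'M[R]_n)
    (f g : 'rV[R]_n -> R) : 'rV[R]_n -> R :=
  fun x => \sum_(i < n) \sum_(j < n) P x i j * pd f i x * pd g j x.

(* P is a Poisson structure on the open set U: smooth-enough is_skew_mx bivector
   field satisfying the Jacobi identity (in coordinates: Jacobi for the
   coordinate functions, equivalently [P,P] = 0). *)
Definition poisson_structure {R : realType} {n : nat} (U : set 'rV[R]_n)
    (P : 'rV[R]_n -> 'M[R]_n) : Prop :=
  [/\ open U,
      (forall x, U x -> differentiable P x),
      (forall x, U x -> is_skew_mx (P x)) &
      (forall x, U x -> forall i j k : 'I_n,
         \sum_(l < n) (P x i l * pd (fun y => P y j k) l x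
                     + P x j l * pd (fun y => P y k i) l x
                     + P x k l * pd (fun y => P y i j) l x) = 0)].

Definition jac {R : realType} {n m : nat} (phi : 'rV[R]_n -> 'rV[R]_m)
    (x : 'rV[R]_n) : 'M[R]_(m, n) :=
  \matrix_(k, i) pd (fun y => phi y 0 k) i x.

Definition poisson_map {R : realType} {n m : nat}
    (U1 : set 'rV[R]_n) (P1 : 'rV[R]_n -> 'M[R]_n)
    (U2 : set 'rV[R]_m) (P2 : 'rV[R]_m -> 'M[R]_m)
    (phi : 'rV[R]_n -> 'rV[R]_m) : Prop :=
  (forall x, U1 x -> U2 (phi x)) /\
  (forall x, U1 x -> differentiable phi x /\
     jac phi x *m P1 x *m (jac phi x)^T = P2 (phi x)).

Definition prod_set {R : realType} {n : nat} (U : set 'rV[R]_n) : set 'rV[R]_(n + n) :=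
  [set z | U (lsubmx z) /\ U (rsubmx z)].

Definition prod_P {R : realType} {n : nat} (P : 'rV[R]_n -> 'M[R]_n)
    (z : 'rV[R]_(n + n)) : 'M[R]_(n + n) :=
  block_mx (P (lsubmx z)) 0 0 (P (rsubmx z)).

Definition mulmap {R : realType} {n : nat} (mul : 'rV[R]_n -> 'rV[R]_n -> 'rV[R]_n)
    (z : 'rV[R]_(n + n)) : 'rV[R]_n := mul (lsubmx z) (rsubmx z).

Definition poisson_lie_group {R : realType} {n : nat}
    (mul : 'rV[R]_n -> 'rV[R]_n -> 'rV[R]_n) (u : 'rV[R]_n)
    (U : set 'rV[R]_n) (P : 'rV[R]_n -> 'M[R]_n) : Prop :=
  [/\ U u,
      (forall x, U x -> exists y, U y /\ mul x y = u /\ mul y x = u),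
      poisson_structure U P,
      poisson_structure (prod_set U) (prod_P P) &
      poisson_map (prod_set U) (prod_P P) U P (mulmap mul)].

Definition linearization {R : realType} {n : nat} (P : 'rV[R]_n -> 'M[R]_n)
    (u x : 'rV[R]_n) : 'M[R]_n :=
  \matrix_(i, j) derive (fun y => P y i j) u x.

Definition ad_tens {R : realType} {n : nat} (br : 'rV[R]_n -> 'rV[R]_n -> 'rV[R]_n)
    (x : 'rV[R]_n) (T : 'M[R]_n) : 'M[R]_n :=
  \sum_(i < n) \sum_(j < n) T i j *: (tens (br x (ev i)) (ev j) + tens (ev i) (br x (ev j))).

(* dual bracket on A^* (dual basis coordinates) induced by D *)
Definition cobr {R : realType} {n : nat} (D : 'rV[R]_n -> 'M[R]_n)
    (xi eta : 'rV[R]_n) : 'rV[R]_n :=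
  \row_k (xi *m D (ev k) *m eta^T) 0 0.

Definition lie_bialgebra {R : realType} {n : nat}
    (br : 'rV[R]_n -> 'rV[R]_n -> 'rV[R]_n) (D : 'rV[R]_n -> 'M[R]_n) : Prop :=
  [/\
      (forall (a : R) x y z, br (a *: x + y) z = a *: br x z + br y z),
      (forall x y, br x y = - br y x) &
      (forall x y z, br x (br y z) + br y (br z x) + br z (br x y) = 0)] /\
  [/\
      (forall (a : R) x y, D (a *: x + y) = a *: D x + D y),
      (forall x, is_skew_mx (D x)),
      (forall xi eta zeta, cobr D xi (cobr D eta zeta) + cobr D eta (cobr D zeta xi)
                           + cobr D zeta (cobr D xi eta) = 0) &
      (forall x y, D (br x y) = ad_tens br x (D y) - ad_tens br y (D x))].

Definition commutator {R : realType} {n : nat} (mul : 'rV[R]_n -> 'rV[R]_n -> 'rV[R]_n)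
    (x y : 'rV[R]_n) : 'rV[R]_n := mul x y - mul y x.

Definition units {R : realType} {n : nat} (mul : 'rV[R]_n -> 'rV[R]_n -> 'rV[R]_n)
    (u : 'rV[R]_n) : set 'rV[R]_n :=
  [set x | exists y, mul x y = u /\ mul y x = u].

From HB Require Import structures.
From mathcomp Require Import all_boot all_order all_algebra.
From mathcomp Require Import all_classical all_reals all_analysis.
From mathcomp Require Import perm ring lra.
Set Implicit Arguments. Unset Strict Implicit. Unset Printing Implicit Defensive.
Import Order.TTheory GRing.Theory Num.Theory.
Import numFieldNormedType.Exports.
Local Open Scope classical_set_scope.
Local Open Scope ring_scope.

(* Write P x := delta (x (x) x) and let L_x, R_x be the matrices of left and right
   multiplication.  Compatibility of the bracket with the multiplication reads
     P (x y) = R_y^T P(x) R_y + L_x^T P(y) L_x,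
   which at x = y = u gives P(u) = 0.  The units form an open set (the zero set of
   x |-> det L_x is closed), restrictions and products of Poisson structures are
   Poisson, so A^x is a Poisson Lie group.  Since P is quadratic, its linearization
   at u is Delta x = delta (x (x) u + u (x) x).  Differentiating the compatibility
   identity at (u, u), first in y and then in x, gives
     Delta (a b) + delta (a (x) b + b (x) a)
       = R_b^T Delta a + Delta a R_b + L_a^T Delta b + Delta b L_a,
   whose antisymmetrization in (a, b) is the cocycle condition.  The coefficient of
   t in the Jacobi identity of P at t w + u is the co-Jacobi identity of Delta. *)

Section Derivatives.
Context {R : realType}.

Lemma derive_quadratic (V W : normedModType R) (f : V -> W) (x v : V) (c d : W) :
  (forall h : R, f (h *: v + x) = f x + h *: c + h ^+ 2 *: d) -> 'D_v f x = c.
Proof.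
move=> fE; apply: cvg_lim => //.
have lin_quot : {near 0^', (fun h : R => c + h *: d)
    =1 (fun h => h^-1 *: ((f \o shift x) (h *: v) - f x))}.
  near=> h; have h0 : h != 0 by near: h; exact: nbhs_dnbhs_neq.
  by rewrite /= fE [X in h^-1 *: X]addrC !addrA addNr add0r scalerDr !scalerA
             expr2 mulrA mulVf // mul1r scale1r.
apply: cvg_trans (near_eq_cvg lin_quot) _.
have : (fun h : R => c + h *: d) @ 0 --> c + 0 *: d.
  by apply: cvgD; [exact: cvg_cst | apply: cvgZr_tmp; exact: cvg_id].
by rewrite scale0r addr0; exact: cvg_within_filter.
Unshelve. all: by end_near. Qed.

Lemma derive_comp_linear {U V W : normedModType R} (L : {linear U -> V})
    (f : V -> W) (x v : U) :
  continuous L -> differentiable f (L x) -> 'D_v (f \o L) x = 'D_(L v) f (L x).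
Proof.
move=> Lc df; have dL : differentiable L x by exact: linear_differentiable.
rewrite !deriveE //; last exact: differentiable_comp.
by rewrite diff_comp // diff_lin.
Qed.

Lemma differentiable_entry (V : normedModType R) p q (Q : V -> 'M[R]_(p, q)) i j x :
  differentiable Q x -> differentiable (fun y => Q y i j) x.
Proof.
move=> dQ; apply: (differentiable_comp (g := fun M : 'M[R]_(p, q) => M i j)) => //.
exact: differentiable_coord.
Qed.

Lemma differentiable_mx (V : normedModType R) p q (Q : V -> 'M[R]_(p, q)) x :
  (forall i j, differentiable (fun y => Q y i j) x) -> differentiable Q x.
Proof.
move=> dQ; suff -> : Q = \sum_i \sum_j (fun y => Q y i j *: delta_mx i j).
  apply: differentiable_sum => i; apply: differentiable_sum => j.
  exact: differentiableZl.
apply/funext => y; rewrite fct_sumE [LHS]matrix_sum_delta.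
by apply: eq_bigr => i _; rewrite fct_sumE.
Qed.

End Derivatives.

Lemma continuous_det {R : realType} n : continuous (fun A : 'M[R]_n => \det A).
Proof.
apply: continuous_big => [|s _]; first exact: add_continuous.
have cprod : continuous (fun A : 'M[R]_n => \prod_i A i (s i)).
  apply: continuous_big => [|i _]; first exact: mul_continuous.
  exact: coord_continuous.
by move=> A; apply: (continuous_comp (cprod A)); exact: mulrl_continuous.
Qed.

Section MatrixFacts.
Context {R : realType}.

Lemma addmxE p q (A B : 'M[R]_(p, q)) i j : (A + B) i j = A i j + B i j.
Proof. by rewrite mxE. Qed.

Lemma oppmxE p q (A : 'M[R]_(p, q)) i j : (- A) i j = - A i j.
Proof. by rewrite mxE. Qed.

Lemma scalemxE p q a (A : 'M[R]_(p, q)) i j : (a *: A) i j = a * A i j.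
Proof. by rewrite mxE. Qed.

Lemma trmxD p q (A B : 'M[R]_(p, q)) : (A + B)^T = A^T + B^T.
Proof. exact: linearD. Qed.

Lemma trmxN p q (A : 'M[R]_(p, q)) : (- A)^T = - A^T.
Proof. exact: linearN. Qed.

Lemma trmxZ p q a (A : 'M[R]_(p, q)) : (a *: A)^T = a *: A^T.
Proof. exact: linearZ. Qed.

Lemma congr_shift n (M X : 'M[R]_n) t :
  (t *: M + 1%:M)^T *m X *m (t *: M + 1%:M)
  = X + t *: (M^T *m X + X *m M) + t ^+ 2 *: (M^T *m X *m M).
Proof.
rewrite trmxD trmxZ trmx1 !(mulmxDl, mulmxDr) -!(scalemxAl, scalemxAr).
rewrite !(mul1mx, mulmx1) !scalerA -expr2 scalerDr.
by apply/matrixP => i j; rewrite !(addmxE, scalemxE); ring.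
Qed.

Lemma quadratic_lin_coef p q (a0 a1 a2 b0 b1 b2 : 'M[R]_(p, q)) :
  (forall t : R, a0 + t *: a1 + t ^+ 2 *: a2 = b0 + t *: b1 + t ^+ 2 *: b2) ->
  a1 = b1.
Proof.
move=> E; apply/matrixP => i j.
have Eij t := congr1 (fun M : 'M[R]_(p, q) => M i j) (E t).
by move: (Eij 1) (Eij (-1)); rewrite !(addmxE, scalemxE) sqrrN expr1n; lra.
Qed.

End MatrixFacts.

Section PoissonStructures.
Context {R : realType}.

Definition jacobiator m (Q : 'M[R]_m) (L : 'rV[R]_m -> 'M[R]_m) (i j k : 'I_m) :=
  \sum_(l < m) (Q i l * L (ev l) j k + Q j l * L (ev l) k i + Q k l * L (ev l) i j).

Definition jacobi_mx m (Q : 'M[R]_m) (L : 'rV[R]_m -> 'M[R]_m) :=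
  forall i j k, jacobiator Q L i j k = 0.

Lemma pd_linearization m (Q : 'rV[R]_m -> 'M[R]_m) (i j l : 'I_m) x :
  pd (fun y => Q y i j) l x = linearization Q x (ev l) i j.
Proof. by rewrite mxE. Qed.

Lemma linearization0 m (Q : 'rV[R]_m -> 'M[R]_m) x : linearization Q x 0 = 0.
Proof. by apply/matrixP => i j; rewrite !mxE derive0. Qed.

Lemma poisson_jacobiE m (Q : 'rV[R]_m -> 'M[R]_m) x :
  (forall i j k : 'I_m, \sum_(l < m) (Q x i l * pd (fun y => Q y j k) l x
      + Q x j l * pd (fun y => Q y k i) l x + Q x k l * pd (fun y => Q y i j) l x) = 0)
  <-> jacobi_mx (Q x) (linearization Q x).
Proof.
by split=> J i j k; rewrite -[RHS](J i j k); apply: eq_bigr => l _;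
  rewrite !pd_linearization.
Qed.

Lemma jacobiator_expand m (A B : 'M[R]_m) (L M : 'rV[R]_m -> 'M[R]_m) t i j k :
  jacobiator (t *: A + t ^+ 2 *: B) (fun v => t *: L v + M v) i j k =
  t * jacobiator A M i j k + t ^+ 2 * (jacobiator A L i j k + jacobiator B M i j k)
  + t ^+ 3 * jacobiator B L i j k.
Proof.
rewrite /jacobiator mulrDr !mulr_sumr -!big_split; apply: eq_bigr => l _ /=.
by rewrite !(addmxE, scalemxE); ring.
Qed.

Lemma jacobi_mx_linear_term m (A B : 'M[R]_m) (L M : 'rV[R]_m -> 'M[R]_m) :
  (forall t : R, jacobi_mx (t *: A + t ^+ 2 *: B) (fun v => t *: L v + M v)) ->
  jacobi_mx A M.
Proof.
move=> J i j k; have Jt t := jacobiator_expand A B L M t i j k.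
by move: (Jt 1) (Jt (-1)) (Jt 2); rewrite !J; lra.
Qed.

Lemma poisson_structure_sub n (U V : set 'rV[R]_n) P :
  open V -> V `<=` U -> poisson_structure U P -> poisson_structure V P.
Proof. by move=> oV VU [_ dP skewP jacP]; split=> // x /VU; auto. Qed.

Lemma poisson_map_sub n m (U1 V1 : set 'rV[R]_n) (U2 V2 : set 'rV[R]_m) P1 P2 phi :
  V1 `<=` U1 -> (forall x, V1 x -> V2 (phi x)) ->
  poisson_map U1 P1 U2 P2 phi -> poisson_map V1 P1 V2 P2 phi.
Proof. by move=> VU phiV [_ hphi]; split=> // x /VU /hphi. Qed.

Section Product.
Variable n : nat.
Implicit Types (P : 'rV[R]_n -> 'M[R]_n) (U : set 'rV[R]_n).

Lemma lsubmx_ev_lshift (i : 'I_n) : lsubmx (ev (lshift n i) : 'rV[R]_(n + n)) = ev i.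
Proof. by apply/rowP => j; rewrite !mxE (inj_eq (@lshift_inj _ _)). Qed.

Lemma rsubmx_ev_lshift (i : 'I_n) : rsubmx (ev (lshift n i) : 'rV[R]_(n + n)) = 0.
Proof. by apply/rowP => j; rewrite !mxE eq_rlshift andbF. Qed.

Lemma lsubmx_ev_rshift (i : 'I_n) : lsubmx (ev (rshift n i) : 'rV[R]_(n + n)) = 0.
Proof. by apply/rowP => j; rewrite !mxE eq_lrshift andbF. Qed.

Lemma rsubmx_ev_rshift (i : 'I_n) : rsubmx (ev (rshift n i) : 'rV[R]_(n + n)) = ev i.
Proof. by apply/rowP => j; rewrite !mxE (inj_eq (@rshift_inj _ _)). Qed.

Lemma linearization_prod_P P (z v : 'rV[R]_(n + n)) :
  differentiable P (lsubmx z) -> differentiable P (rsubmx z) ->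
  linearization (prod_P P) z v =
  block_mx (linearization P (lsubmx z) (lsubmx v)) 0
           0 (linearization P (rsubmx z) (rsubmx v)).
Proof.
move=> dPl dPr; apply/matrixP => i j; rewrite mxE /prod_P.
case: (split_ordP i) => {}i ->; case: (split_ordP j) => {}j ->.
- under eq_fun do rewrite block_mxEul.
  rewrite block_mxEul mxE.
  exact: derive_comp_linear (@continuous_lsubmx _ _ _ _) (differentiable_entry i j dPl).
- by under eq_fun do rewrite block_mxEur mxE; rewrite block_mxEur mxE derive_cst.
- by under eq_fun do rewrite block_mxEdl mxE; rewrite block_mxEdl mxE derive_cst.
- under eq_fun do rewrite block_mxEdr.
  rewrite block_mxEdr mxE.
  exact: derive_comp_linear (@continuous_rsubmx _ _ _ _) (differentiable_entry i j dPr).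
Qed.

Lemma jacobi_block_mx (A B : 'M[R]_n) (La Lb : 'rV[R]_n -> 'M[R]_n)
    (L : 'rV[R]_(n + n) -> 'M[R]_(n + n)) :
  La 0 = 0 -> Lb 0 = 0 ->
  (forall v, L v = block_mx (La (lsubmx v)) 0 0 (Lb (rsubmx v))) ->
  jacobi_mx A La -> jacobi_mx B Lb -> jacobi_mx (block_mx A 0 0 B) L.
Proof.
move=> La0 Lb0 LE JA JB i j k; rewrite /jacobiator; under eq_bigr do rewrite !LE.
rewrite big_split_ord /=.
under eq_bigr do rewrite lsubmx_ev_lshift rsubmx_ev_lshift Lb0.
under [X in _ + X]eq_bigr do rewrite lsubmx_ev_rshift rsubmx_ev_rshift La0.
have mx0E p q (a : 'I_p) (b : 'I_q) : (0 : 'M[R]_(p, q)) a b = 0 by rewrite mxE.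
have blockE := (block_mxEul, block_mxEur, block_mxEdl, block_mxEdr, mx0E).
case: (split_ordP i) => {}i ->; case: (split_ordP j) => {}j ->;
  case: (split_ordP k) => {}k ->.
all: under eq_bigr do rewrite !blockE ?(mul0r, mulr0, addr0, add0r).
all: under [X in _ + X]eq_bigr do rewrite !blockE ?(mul0r, mulr0, addr0, add0r).
all: rewrite ?big1_eq ?addr0 ?add0r //.
- exact: JA.
- exact: JB.
Qed.

Lemma open_prod_set U : open U -> open (prod_set U).
Proof.
move=> oU; apply: openI; apply: open_comp => // z _.
  exact: continuous_lsubmx.
exact: continuous_rsubmx.
Qed.

Lemma poisson_structure_prod U P :
  poisson_structure U P -> poisson_structure (prod_set U) (prod_P P).
Proof.
case=> oU dP skewP jacP; split; first exact: open_prod_set.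
- move=> z [Ul Ur]; apply: differentiable_mx => i j; rewrite /prod_P.
  have dPsub (s : {linear 'rV[R]_(n + n) -> 'rV[R]_n}) :
      U (s z) -> continuous s -> forall a b, differentiable (fun y => P (s y) a b) z.
    move=> Us sc a b; apply: (differentiable_comp (g := fun x => P x a b)).
      exact: linear_differentiable.
    exact: differentiable_entry (dP _ Us).
  case: (split_ordP i) => {}i ->; case: (split_ordP j) => {}j ->.
  + under eq_fun do rewrite block_mxEul.
    by apply: dPsub => //; exact: continuous_lsubmx.
  + by under eq_fun do rewrite block_mxEur mxE; exact: differentiable_cst.
  + by under eq_fun do rewrite block_mxEdl mxE; exact: differentiable_cst.
  + under eq_fun do rewrite block_mxEdr.
    by apply: dPsub => //; exact: continuous_rsubmx.
- move=> z [Ul Ur]; rewrite /is_skew_mx /prod_P tr_block_mx !trmx0.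
  by rewrite (skewP _ Ul) (skewP _ Ur) opp_block_mx !oppr0.
move=> z [Ul Ur]; apply/poisson_jacobiE.
apply: (jacobi_block_mx (linearization0 _ _) (linearization0 _ _)).
- by move=> v; apply: linearization_prod_P; exact: dP.
- by apply/poisson_jacobiE; exact: jacP.
- by apply/poisson_jacobiE; exact: jacP.
Qed.

End Product.

End PoissonStructures.

Section CoJacobi.
Context {R : realType} {n : nat}.
Implicit Types (D : 'rV[R]_n -> 'M[R]_n).

Lemma row_linear_eq0 (f : 'rV[R]_n -> 'rV[R]_n) :
  (forall a x y, f (a *: x + y) = a *: f x + f y) -> (forall i, f (ev i) = 0) ->
  forall x, f x = 0.
Proof.
move=> fZD f_ev x; have f0 : f 0 = 0.
  have := fZD 1 0 0; rewrite !scale1r addr0 => f0D.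
  by apply: (addrI (f 0)); rewrite addr0 -f0D.
rewrite (row_sum_delta x); elim/big_rec: _ => [|i y _ fy]; first exact: f0.
by rewrite fZD fy addr0 -/(ev i) f_ev scaler0.
Qed.

Lemma cobrE D x y k : cobr D x y 0 k = (x *m D (ev k) *m y^T) 0 0.
Proof. by rewrite mxE. Qed.

Lemma cobrDl D a x y z : cobr D (a *: x + y) z = a *: cobr D x z + cobr D y z.
Proof.
apply/rowP => k; rewrite addmxE scalemxE !cobrE !mulmxDl -!scalemxAl.
by rewrite addmxE scalemxE.
Qed.

Lemma cobrDr D a x y z : cobr D z (a *: x + y) = a *: cobr D z x + cobr D z y.
Proof.
apply/rowP => k; rewrite addmxE scalemxE !cobrE linearD linearZ /= mulmxDr.
by rewrite -scalemxAr addmxE scalemxE.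
Qed.

Definition cojacobiator D xi eta zeta :=
  cobr D xi (cobr D eta zeta) + cobr D eta (cobr D zeta xi) + cobr D zeta (cobr D xi eta).

Lemma ev_mulmx_tr (M : 'M[R]_n) p (v : 'rV[R]_n) :
  (ev p *m M *m v^T) 0 0 = \sum_l M p l * v 0 l.
Proof. by rewrite /ev -rowE mxE; apply: eq_bigr => l _; rewrite !mxE. Qed.

Lemma ev_mulmx_ev (M : 'M[R]_n) p q : (ev p *m M *m (ev q)^T) 0 0 = M p q.
Proof. by rewrite /ev -(rowE p M) trmx_delta -(colE q (row p M)) !mxE. Qed.

Lemma cojacobiator_ev D p q r k :
  cojacobiator D (ev p) (ev q) (ev r) 0 k = jacobiator (D (ev k)) D p q r.
Proof.
rewrite /jacobiator !big_split /= !addmxE !cobrE !ev_mulmx_tr.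
by congr (_ + _ + _); apply: eq_bigr => l _; rewrite cobrE ev_mulmx_ev.
Qed.

Lemma cojacobiator_eq0 D : (forall w, jacobi_mx (D w) D) ->
  forall xi eta zeta, cojacobiator D xi eta zeta = 0.
Proof.
move=> J xi eta zeta.
have cojZD1 a x y z w : cojacobiator D (a *: x + y) z w
    = a *: cojacobiator D x z w + cojacobiator D y z w.
  by rewrite /cojacobiator !(cobrDl, cobrDr); apply/rowP => k;
    rewrite !(addmxE, scalemxE); ring.
have cojZD2 a x y z w : cojacobiator D z (a *: x + y) w
    = a *: cojacobiator D z x w + cojacobiator D z y w.
  by rewrite /cojacobiator !(cobrDl, cobrDr); apply/rowP => k;
    rewrite !(addmxE, scalemxE); ring.
have cojZD3 a x y z w : cojacobiator D z w (a *: x + y)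
    = a *: cojacobiator D z w x + cojacobiator D z w y.
  by rewrite /cojacobiator !(cobrDl, cobrDr); apply/rowP => k;
    rewrite !(addmxE, scalemxE); ring.
apply: (row_linear_eq0 (f := fun x => cojacobiator D x eta zeta)) => [a x y|p].
  exact: cojZD1.
apply: (row_linear_eq0 (f := fun y => cojacobiator D (ev p) y zeta)) => [a x y|q].
  exact: cojZD2.
apply: row_linear_eq0 => [a x y|r]; first exact: cojZD3.
by apply/rowP => k; rewrite cojacobiator_ev J mxE.
Qed.

End CoJacobi.

Section Tensors.
Context {R : realType} {n : nat}.
Implicit Types x y z : 'rV[R]_n.

Lemma tensDl x y z : tens (x + y) z = tens x z + tens y z.
Proof. by rewrite /tens linearD mulmxDl. Qed.

Lemma tensDr x y z : tens z (x + y) = tens z x + tens z y.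
Proof. by rewrite /tens mulmxDr. Qed.

Lemma tensZl a x z : tens (a *: x) z = a *: tens x z.
Proof. by rewrite /tens linearZ scalemxAl. Qed.

Lemma tensZr a x z : tens z (a *: x) = a *: tens z x.
Proof. by rewrite /tens scalemxAr. Qed.

Lemma tens_trmx x y : (tens x y)^T = tens y x.
Proof. by rewrite /tens trmx_mul trmxK. Qed.

Lemma tens_ev (i j : 'I_n) : tens (ev i) (ev j) = delta_mx i j :> 'M[R]_n.
Proof. by rewrite /tens /ev trmx_delta mul_delta_mx. Qed.

Variable delta : {linear 'M[R]_n -> 'M[R]_n}.

Definition dtens x y := delta (tens x y).
Definition dsym x y := delta (tens x y + tens y x).

Lemma dsymE x y : dsym x y = dtens x y + dtens y x.
Proof. exact: linearD. Qed.

Lemma dsymC x y : dsym x y = dsym y x.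
Proof. by rewrite /dsym addrC. Qed.

Lemma dtensDl x y z : dtens (x + y) z = dtens x z + dtens y z.
Proof. by rewrite /dtens tensDl linearD. Qed.

Lemma dtensDr x y z : dtens z (x + y) = dtens z x + dtens z y.
Proof. by rewrite /dtens tensDr linearD. Qed.

Lemma dtensZl a x z : dtens (a *: x) z = a *: dtens x z.
Proof. by rewrite /dtens tensZl linearZ. Qed.

Lemma dtensZr a x z : dtens z (a *: x) = a *: dtens z x.
Proof. by rewrite /dtens tensZr linearZ. Qed.

Lemma dsymDl x y z : dsym (x + y) z = dsym x z + dsym y z.
Proof.
rewrite !dsymE dtensDl dtensDr.
by apply/matrixP => i j; rewrite !addmxE; ring.
Qed.

Lemma dsymZl a x z : dsym (a *: x) z = a *: dsym x z.
Proof. by rewrite !dsymE dtensZl dtensZr scalerDr. Qed.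

Lemma dsymNl x z : dsym (- x) z = - dsym x z.
Proof. by rewrite -scaleN1r dsymZl scaleN1r. Qed.

Lemma dtens_shift h x v : dtens (h *: v + x) (h *: v + x)
  = dtens x x + h *: dsym x v + h ^+ 2 *: dtens v v.
Proof.
rewrite dsymE !(dtensDl, dtensDr, dtensZl, dtensZr).
by apply/matrixP => i j; rewrite !(addmxE, scalemxE); ring.
Qed.

Lemma dsym_shift t x y z w : dsym (t *: x + y) (t *: z + w)
  = dsym y w + t *: (dsym x w + dsym y z) + t ^+ 2 *: dsym x z.
Proof.
rewrite !dsymE !(dtensDl, dtensDr, dtensZl, dtensZr).
by apply/matrixP => i j; rewrite !(addmxE, scalemxE); ring.
Qed.

Lemma linearization_dtens x v : linearization (fun y => dtens y y) x v = dsym x v.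
Proof.
apply/matrixP => i j; rewrite mxE.
apply: (derive_quadratic (d := dtens v v i j)) => h.
by rewrite dtens_shift !(addmxE, scalemxE).
Qed.

End Tensors.

Section AlgebraMultiplication.
Context {R : realType} {n : nat} (mul : 'rV[R]_n -> 'rV[R]_n -> 'rV[R]_n) (u : 'rV[R]_n).
Hypothesis hA : assoc_unital_algebra mul u.

Lemma amulDl x y z : mul (x + y) z = mul x z + mul y z.
Proof. by case: hA => mulZDl _ _ _; rewrite -{1}[x]scale1r mulZDl scale1r. Qed.

Lemma amulDr x y z : mul z (x + y) = mul z x + mul z y.
Proof. by case: hA => _ mulZDr _ _; rewrite -{1}[x]scale1r mulZDr scale1r. Qed.

Lemma amul0l z : mul 0 z = 0.
Proof. by apply: (addrI (mul 0 z)); rewrite -amulDl !addr0. Qed.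

Lemma amul0r z : mul z 0 = 0.
Proof. by apply: (addrI (mul z 0)); rewrite -amulDr !addr0. Qed.

Lemma amulZl a x z : mul (a *: x) z = a *: mul x z.
Proof. by case: hA => mulZDl _ _ _; rewrite -[a *: x]addr0 mulZDl amul0l addr0. Qed.

Lemma amulZr a x z : mul z (a *: x) = a *: mul z x.
Proof. by case: hA => _ mulZDr _ _; rewrite -[a *: x]addr0 mulZDr amul0r addr0. Qed.

Lemma amulNl x z : mul (- x) z = - mul x z.
Proof. by rewrite -scaleN1r amulZl scaleN1r. Qed.

Lemma amulNr x z : mul z (- x) = - mul z x.
Proof. by rewrite -scaleN1r amulZr scaleN1r. Qed.

Lemma amulA x y z : mul x (mul y z) = mul (mul x y) z.
Proof. by case: hA. Qed.

Lemma amul1l x : mul u x = x.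
Proof. by case: hA => _ _ _ /(_ x) []. Qed.

Lemma amul1r x : mul x u = x.
Proof. by case: hA => _ _ _ /(_ x) []. Qed.

Lemma amul_suml I (r : seq I) (P : pred I) (F : I -> 'rV[R]_n) z :
  mul (\sum_(i <- r | P i) F i) z = \sum_(i <- r | P i) mul (F i) z.
Proof. by elim/big_rec2: _ => [|i a b _ <-]; rewrite ?amul0l // amulDl. Qed.

Lemma amul_sumr I (r : seq I) (P : pred I) (F : I -> 'rV[R]_n) z :
  mul z (\sum_(i <- r | P i) F i) = \sum_(i <- r | P i) mul z (F i).
Proof. by elim/big_rec2: _ => [|i a b _ <-]; rewrite ?amul0r // amulDr. Qed.

Lemma commutator_lie :
  [/\ forall a x y z, commutator mul (a *: x + y) z
                      = a *: commutator mul x z + commutator mul y z,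
      forall x y, commutator mul x y = - commutator mul y x &
      forall x y z, commutator mul x (commutator mul y z)
        + commutator mul y (commutator mul z x) + commutator mul z (commutator mul x y) = 0].
Proof.
rewrite /commutator; split => [a x y z | x y | x y z].
- rewrite amulDl amulDr amulZl amulZr.
  by apply/rowP => k; rewrite !mxE; ring.
- by rewrite opprB.
- rewrite !(amulDl, amulDr, amulNl, amulNr) !amulA.
  by apply/rowP => k; rewrite !mxE; ring.
Qed.

Lemma units_mul x y : units mul u x -> units mul u y -> units mul u (mul x y).
Proof.
move=> [x' [xx' x'x]] [y' [yy' y'y]]; exists (mul y' x'); split.
  by rewrite -amulA [mul y _]amulA yy' amul1l.
by rewrite -amulA [mul x' _]amulA x'x amul1l.
Qed.

Definition lmul_mx z : 'M[R]_n := \matrix_(i, j) mul z (ev i) 0 j.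
Definition rmul_mx z : 'M[R]_n := \matrix_(i, j) mul (ev i) z 0 j.
Definition ad_mx z := lmul_mx z - rmul_mx z.

Lemma mul_lmul_mx v z : v *m lmul_mx z = mul z v.
Proof.
apply/rowP => j; rewrite !mxE {2}(row_sum_delta v) amul_sumr summxE.
by apply: eq_bigr => i _; rewrite amulZr !mxE.
Qed.

Lemma mul_rmul_mx v z : v *m rmul_mx z = mul v z.
Proof.
apply/rowP => j; rewrite !mxE {2}(row_sum_delta v) amul_suml summxE.
by apply: eq_bigr => i _; rewrite amulZl !mxE.
Qed.

Lemma lmul_mxD x y : lmul_mx (x + y) = lmul_mx x + lmul_mx y.
Proof. by apply/matrixP => i j; rewrite !mxE amulDl mxE. Qed.

Lemma lmul_mxZ a x : lmul_mx (a *: x) = a *: lmul_mx x.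
Proof. by apply/matrixP => i j; rewrite !mxE amulZl mxE. Qed.

Lemma rmul_mxD x y : rmul_mx (x + y) = rmul_mx x + rmul_mx y.
Proof. by apply/matrixP => i j; rewrite !mxE amulDr mxE. Qed.

Lemma rmul_mxZ a x : rmul_mx (a *: x) = a *: rmul_mx x.
Proof. by apply/matrixP => i j; rewrite !mxE amulZr mxE. Qed.

Lemma lmul_mx1 : lmul_mx u = 1%:M.
Proof. by apply/matrixP => i j; rewrite !mxE amul1l !mxE eq_sym. Qed.

Lemma rmul_mx1 : rmul_mx u = 1%:M.
Proof. by apply/matrixP => i j; rewrite !mxE amul1r !mxE eq_sym. Qed.

Lemma lmul_mxM x y : lmul_mx (mul x y) = lmul_mx y *m lmul_mx x.
Proof. by apply/row_matrixP => i; rewrite !rowE mulmxA !mul_lmul_mx amulA. Qed.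

Lemma continuous_lmul_mx : continuous lmul_mx.
Proof.
have -> : lmul_mx = fun z => \sum_i z 0 i *: lmul_mx (ev i).
  apply/funext => z; rewrite {1}(row_sum_delta z).
  elim/big_rec2: _ => [|i a M _ <-]; last by rewrite lmul_mxD lmul_mxZ.
  by apply/matrixP => i j; rewrite !mxE amul0l mxE.
apply: continuous_big => [|i _]; first exact: add_continuous.
by move=> z; apply: continuousZr_tmp; exact: coord_continuous.
Qed.

Lemma unitsE : units mul u = [set x | \det (lmul_mx x) != 0].
Proof.
apply/seteqP; split => x /=.
  case=> y [xy _]; apply/negP => /eqP detx0.
  move: (congr1 determinant (lmul_mxM x y)).
  by rewrite xy lmul_mx1 det1 det_mulmx detx0 mulr0 => /eqP; rewrite oner_eq0.
move=> detx; have xU : lmul_mx x \in unitmx by rewrite unitmxE unitfE.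
pose y := u *m invmx (lmul_mx x).
have xy : mul x y = u by rewrite -mul_lmul_mx mulmxKV.
exists y; split => //; apply: (can_inj (mulmxK xU)).
by rewrite !mul_lmul_mx amulA -[mul _ y]mul_lmul_mx mulmxKV // amul1l amul1r.
Qed.

Lemma open_units : open (units mul u).
Proof.
have -> : units mul u = (fun z => \det (lmul_mx z)) @^-1` [set r | r != 0].
  by rewrite unitsE.
apply: open_comp; last exact: open_neq.
by move=> z _; apply: continuous_comp; [exact: continuous_lmul_mx | exact: continuous_det].
Qed.

Lemma pd_mulmap (k : 'I_n) (i : 'I_(n + n)) z :
  pd (fun y => mulmap mul y 0 k) i z =
  (mul (lsubmx z) (rsubmx (ev i)) + mul (lsubmx (ev i)) (rsubmx z)) 0 k.
Proof.
apply: (derive_quadratic (d := mul (lsubmx (ev i)) (rsubmx (ev i)) 0 k)) => h.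
rewrite /mulmap !linearD !linearZ /= amulDl !amulDr !amulZl !amulZr !mxE.
by rewrite /GRing.scale /=; ring.
Qed.

Lemma jac_mulmap z :
  jac (mulmap mul) z = row_mx (rmul_mx (rsubmx z))^T (lmul_mx (lsubmx z))^T.
Proof.
apply/matrixP => k i; rewrite mxE pd_mulmap.
case: (split_ordP i) => {}i ->.
  by rewrite row_mxEl lsubmx_ev_lshift rsubmx_ev_lshift amul0r add0r !mxE.
by rewrite row_mxEr lsubmx_ev_rshift rsubmx_ev_rshift amul0l addr0 !mxE.
Qed.

Lemma commutatorE x v : commutator mul x v = v *m ad_mx x.
Proof. by rewrite /commutator /ad_mx mulmxBr mul_lmul_mx mul_rmul_mx. Qed.

Lemma ad_tensE x T : ad_tens (commutator mul) x T = (ad_mx x)^T *m T + T *m ad_mx x.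
Proof.
rewrite [in RHS](matrix_sum_delta T) mulmx_sumr mulmx_suml -big_split.
apply: eq_bigr => i _; rewrite mulmx_sumr mulmx_suml -big_split.
apply: eq_bigr => j _; rewrite !commutatorE /tens trmx_mul -!mulmxA.
rewrite -/(tens (ev i) (ev j)) mulmxA -/(tens (ev i) (ev j)) tens_ev.
by rewrite scalerDr -scalemxAr -scalemxAl.
Qed.

End AlgebraMultiplication.

Section QuadraticPoissonAlgebra.
Context {R : realType} {n : nat} (mul : 'rV[R]_n -> 'rV[R]_n -> 'rV[R]_n) (u : 'rV[R]_n).
Context (delta : {linear 'M[R]_n -> 'M[R]_n}).
Hypothesis hA : assoc_unital_algebra mul u.
Hypothesis hM : poisson_map setT (prod_P (fun x => delta (tens x x))) setT
                  (fun x => delta (tens x x)) (mulmap mul).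

Local Notation dtens := (dtens delta).
Local Notation dsym := (dsym delta).
Local Notation Lmx := (lmul_mx mul).
Local Notation Rmx := (rmul_mx mul).

Lemma dtens_mul x y : dtens (mul x y) (mul x y)
  = (Rmx y)^T *m dtens x x *m Rmx y + (Lmx x)^T *m dtens y y *m Lmx x.
Proof.
have [_ /(_ (row_mx x y) I) [_]] := hM.
rewrite /dtens (jac_mulmap hA) /prod_P /mulmap !row_mxKl !row_mxKr => <-.
by rewrite mul_row_block !mulmx0 addr0 add0r tr_row_mx mul_row_col !trmxK.
Qed.

Lemma dtens_unit : dtens u u = 0.
Proof.
have := dtens_mul u u.
rewrite (amul1l hA) (rmul_mx1 hA) (lmul_mx1 hA) trmx1 mul1mx mulmx1.
by move=> E; apply: (addrI (dtens u u)); rewrite addr0 -E.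
Qed.

Lemma dtens_shift_unit h v :
  dtens (h *: v + u) (h *: v + u) = h *: dsym v u + h ^+ 2 *: dtens v v.
Proof. by rewrite dtens_shift dtens_unit add0r dsymC. Qed.

(* The coefficient of t in dtens_mul at (x, t b + u). *)
Lemma dsym_mulr x b : dsym x (mul x b)
  = (Rmx b)^T *m dtens x x + dtens x x *m Rmx b + (Lmx x)^T *m dsym b u *m Lmx x.
Proof.
apply: (quadratic_lin_coef (a0 := dtens x x) (a2 := dtens (mul x b) (mul x b))
  (b0 := dtens x x) (b2 := (Rmx b)^T *m dtens x x *m Rmx b
                           + (Lmx x)^T *m dtens b b *m Lmx x)) => t.
rewrite -dtens_shift.
have := dtens_mul x (t *: b + u).
rewrite (amulDr hA) (amulZr hA) (amul1r hA) => ->.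
rewrite (rmul_mxD hA) (rmul_mxZ hA) (rmul_mx1 hA) congr_shift dtens_shift_unit.
rewrite mulmxDr mulmxDl -!(scalemxAl, scalemxAr).
by apply/matrixP => i j; rewrite !(addmxE, scalemxE); ring.
Qed.

(* The coefficient of t in dsym_mulr at (t a + u, b). *)
Lemma dsym_unit_mul a b : dsym (mul a b) u + dsym a b
  = (Rmx b)^T *m dsym a u + dsym a u *m Rmx b
    + (Lmx a)^T *m dsym b u + dsym b u *m Lmx a.
Proof.
rewrite addrC [dsym _ u]dsymC.
apply: (quadratic_lin_coef (a0 := dsym u b) (a2 := dsym a (mul a b))
  (b0 := dsym b u) (b2 := (Rmx b)^T *m dtens a a + dtens a a *m Rmx b
                          + (Lmx a)^T *m dsym b u *m Lmx a)) => t.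
rewrite -dsym_shift.
have := dsym_mulr (t *: a + u) b.
rewrite (amulDl hA) (amulZl hA) (amul1l hA) => ->.
rewrite dtens_shift_unit (lmul_mxD hA) (lmul_mxZ hA) (lmul_mx1 hA) congr_shift.
rewrite !(mulmxDl, mulmxDr) -!(scalemxAl, scalemxAr).
by apply/matrixP => i j; rewrite !(addmxE, scalemxE); ring.
Qed.

Lemma dsym_unit_cocycle x y : dsym (commutator mul x y) u
  = ad_tens (commutator mul) x (dsym y u) - ad_tens (commutator mul) y (dsym x u).
Proof.
have := dsym_unit_mul x y; have := dsym_unit_mul y x.
rewrite !(ad_tensE hA) /commutator dsymDl dsymNl (dsymC _ y x) /ad_mx.
rewrite !(trmxD, trmxN, mulmxDl, mulmxDr, mulNmx, mulmxN) => Eyx Exy.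
apply/matrixP => i j.
move: Eyx Exy => /(congr1 (fun M : 'M[R]_n => M i j)) + /(congr1 (fun M : 'M[R]_n => M i j)).
by rewrite !(addmxE, oppmxE); lra.
Qed.

Lemma jacobi_mx_dsym_unit :
  poisson_structure setT (fun x => delta (tens x x)) ->
  forall w, jacobi_mx (dsym w u) (fun v => dsym v u).
Proof.
case=> _ _ _ jacP w.
apply: (jacobi_mx_linear_term (B := dtens w w) (L := dsym w)) => t.
have lin : linearization (fun y => dtens y y) (t *: w + u)
           = fun v => t *: dsym w v + dsym v u.
  by apply/funext => v; rewrite linearization_dtens dsymDl dsymZl [dsym u v]dsymC.
rewrite -dtens_shift_unit -lin; apply/(poisson_jacobiE (fun y => dtens y y)).
exact: jacP.
Qed.

Lemma lie_bialgebra_dsym_unit :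
  (forall S : 'M[R]_n, is_symm_mx S -> is_skew_mx (delta S)) ->
  poisson_structure setT (fun x => delta (tens x x)) ->
  lie_bialgebra (commutator mul) (fun x => dsym x u).
Proof.
move=> hd hP; split; first exact: (commutator_lie hA).
split.
- by move=> a x y; rewrite dsymDl dsymZl.
- by move=> x; apply: hd; rewrite /is_symm_mx trmxD !tens_trmx addrC.
- by move=> xi eta zeta; apply: cojacobiator_eq0; exact: jacobi_mx_dsym_unit.
- exact: dsym_unit_cocycle.
Qed.

End QuadraticPoissonAlgebra.

Theorem theorem5 (R : realType) (n : nat)
  (mul : 'rV[R]_n -> 'rV[R]_n -> 'rV[R]_n) (u : 'rV[R]_n)
  (delta : {linear 'M[R]_n -> 'M[R]_n}) :
  assoc_unital_algebra mul u ->
  (forall S : 'M[R]_n, is_symm_mx S -> is_skew_mx (delta S)) ->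
  poisson_structure setT (fun x => delta (tens x x)) ->
  poisson_map setT (prod_P (fun x => delta (tens x x))) setT
              (fun x => delta (tens x x)) (mulmap mul) ->
  poisson_lie_group mul u (units mul u) (fun x => delta (tens x x)) /\
  (forall x, linearization (fun y => delta (tens y y)) u x
             = delta (tens x u + tens u x)) /\
  lie_bialgebra (commutator mul) (linearization (fun y => delta (tens y y)) u).
Proof.
move=> hA hd hP hM.
have lin_u : linearization (fun y => delta (tens y y)) u = fun x => dsym delta x u.
  by apply/funext => x; rewrite (linearization_dtens delta u x) dsymC.
have hPU := poisson_structure_sub (open_units hA) (@subsetT _ _) hP.
split; [split | split].
- by exists u; rewrite (amul1l hA).
- by move=> x [y [xy yx]]; exists y; split => //; exists x.
- exact: hPU.
- exact: poisson_structure_prod hPU.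
- by apply: poisson_map_sub hM => // z [Ux Uy]; exact: units_mul.
- by rewrite lin_u.
- by rewrite lin_u; exact: lie_bialgebra_dsym_unit.
Qed.
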